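(* Let $m\ge n\ge k$ be positive integers, $A\in\mathbb{R}^{m\times n}$ with $A^TA=I_n$, $x^*\in\mathbb{R}^n$ with support $S^*$, $|S^*|\le k$, and $y=Ax^*$. Then for every initialization $\mathcal{X}^0$, every $\eta>0$ and every $t\in\mathbb{N}$, the SEA iterates satisfy $\eta A^T(Ax^t-y)=u^t$.
   Context: $S^*=\{i:x^*_i\neq0\}$. For $v\in\mathbb{R}^n$, $\mathrm{largest}_k(v)$ is the set of indices of the $k$ entries of $v$ with largest absolute value (ties broken by selecting the highest indices). For $S\subseteq\{1,\dots,n\}$, $A_S$ is the submatrix of columns indexed by $S$, $v_S$ the restriction of a vector to $S$, $A_S^\dagger$ the Moore–Penrose pseudoinverse of $A_S$. SEA with initialization $\mathcal{X}^0$ and step size $\eta$ generates, for $t=0,1,2,\dots$: $S^t=\mathrm{largest}_k(\mathcal{X}^t)$; $x^t_i=0$ for $i\notin S^t$ and $x^t_{S^t}=A_{S^t}^\dagger y$; $\mathcal{X}^{t+1}=\mathcal{X}^t-\eta A^T(Ax^t-y)$. The oracle direction is $u^t_i=-\eta x^*_i$ if $i\in S^*\setminus S^t$ and $u^t_i=0$ otherwise. *)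

From HB Require Import structures.
From Stdlib Require Import ClassicalEpsilon.
From mathcomp Require Import all_boot all_order all_algebra.
From mathcomp Require Import reals.
Set Implicit Arguments. Unset Strict Implicit. Unset Printing Implicit Defensive.
Import Order.TTheory GRing.Theory Num.Theory.
Local Open Scope ring_scope.

Section SEA.
Variable R : realType.

(* Moore-Penrose pseudoinverse: the (unique) B satisfying the four Penrose
   conditions; chosen via classical epsilon. *)
Definition is_pinv (p q : nat) (M : 'M[R]_(p, q)) (B : 'M[R]_(q, p)) : Prop :=
  [/\ M *m B *m M = M, B *m M *m B = B,
      (M *m B)^T = M *m B & (B *m M)^T = B *m M].

Definition pinv (p q : nat) (M : 'M[R]_(p, q)) : 'M[R]_(q, p) :=
  epsilon (inhabits (0 : 'M[R]_(q, p))) (is_pinv M).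

Definition supp (n : nat) (v : 'cV[R]_n) : {set 'I_n} := [set i | v i 0 != 0].

Definition beats (n : nat) (v : 'cV[R]_n) (j i : 'I_n) : bool :=
  (`|v i 0| < `|v j 0|) || ((`|v j 0| == `|v i 0|) && (i < j)%N).

(* largest_k v: the k indices that come first in the above total order,
   i.e. those beaten by fewer than k indices. *)
Definition largest (n : nat) (k : nat) (v : 'cV[R]_n) : {set 'I_n} :=
  [set i | #|[set j | beats v j i]| < k]%N.

Definition colsS (m n : nat) (A : 'M[R]_(m, n)) (S : {set 'I_n}) : 'M[R]_(m, #|S|) :=
  colsub (fun j : 'I_#|S| => enum_val j) A.

(* x with x_i = 0 outside S and x_S = A_S^dagger y *)
Definition sea_x (m n : nat) (A : 'M[R]_(m, n)) (y : 'cV[R]_m) (S : {set 'I_n})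
  : 'cV[R]_n :=
  let z := pinv (colsS A S) *m y in
  \col_(i < n) \sum_(j < #|S| | enum_val j == i) z j 0.

Fixpoint sea_X (m n : nat) (A : 'M[R]_(m, n)) (y : 'cV[R]_m) (k : nat) (eta : R)
  (X0 : 'cV[R]_n) (t : nat) : 'cV[R]_n :=
  match t with
  | 0 => X0
  | t'.+1 =>
      let X := sea_X A y k eta X0 t' in
      X - eta *: (A^T *m (A *m sea_x A y (largest k X) - y))
  end.

Definition sea_S (m n : nat) (A : 'M[R]_(m, n)) (y : 'cV[R]_m) (k : nat) (eta : R)
  (X0 : 'cV[R]_n) (t : nat) : {set 'I_n} := largest k (sea_X A y k eta X0 t).

Definition sea_xt (m n : nat) (A : 'M[R]_(m, n)) (y : 'cV[R]_m) (k : nat) (eta : R)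
  (X0 : 'cV[R]_n) (t : nat) : 'cV[R]_n := sea_x A y (sea_S A y k eta X0 t).

Definition oracle (n : nat) (eta : R) (xstar : 'cV[R]_n) (St : {set 'I_n}) : 'cV[R]_n :=
  \col_(i < n) (if (i \in supp xstar) && (i \notin St) then - eta * xstar i 0 else 0).

End SEA.

(* With orthonormal columns, [A^T] is the pseudoinverse of every column
   submatrix [A_S], so [x^t] is just [x^*] masked to [S^t]; then
   [A^T (A x^t - y) = x^t - x^*] vanishes on [S^t] and equals [-x^*] off it. *)
From mathcomp Require Import all_boot all_order all_algebra.
From mathcomp Require Import reals.
From Stdlib Require Import ClassicalEpsilon.
Import Order.TTheory GRing.Theory Num.Theory.
Local Open Scope ring_scope.

Lemma mxsub1_inj (R : pzSemiRingType) (n n' : nat) (f : 'I_n' -> 'I_n) :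
  injective f -> mxsub f f (1%:M : 'M[R]_n) = 1%:M.
Proof. by move=> f_inj; apply/matrixP => i j; rewrite !mxE (inj_eq f_inj). Qed.

Lemma sum_enum_val_eq (V : nmodType) (T : finType) (S : {set T}) (F : T -> V)
    (i : T) :
  \sum_(j < #|S| | enum_val j == i) F (enum_val j) = if i \in S then F i else 0.
Proof.
rewrite -(big_enum_val_cond (A := mem S) (fun x => x == i)).
case: ifP => iS.
- by rewrite (big_pred1 i) // => x /=; case: eqP => [->|]; rewrite ?iS ?andbF.
- by rewrite big_pred0 // => x; apply/negbTE/andP => -[xS /eqP xi]; rewrite -xi xS in iS.
Qed.

Definition restrict {V : nmodType} {n : nat} (S : {set 'I_n}) (v : 'cV[V]_n)
    : 'cV[V]_n :=
  \col_i (if i \in S then v i 0 else 0).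

Section SEAOrthonormal.
Variable R : realType.

Lemma pinv_orthonormal (p q : nat) (M : 'M[R]_(p, q)) :
  M^T *m M = 1%:M -> pinv M = M^T.
Proof.
move=> MTM.
have pinv_trmx : is_pinv M M^T.
  split; first by rewrite -mulmxA MTM mulmx1.
  - by rewrite MTM mul1mx.
  - by rewrite trmx_mul trmxK.
  - by rewrite MTM trmx1.
have [MBM _ MB_sym _] := epsilon_spec (inhabits 0) (is_pinv M) (ex_intro _ _ pinv_trmx).
rewrite /pinv; set B := epsilon _ _ in MBM MB_sym *.
(* [B = M^T M B = M^T (M B)^T = (M B M)^T = M^T] *)
by rewrite -[B]mul1mx -MTM -mulmxA -MB_sym -trmx_mul MBM.
Qed.

Variables (m n : nat) (A : 'M[R]_(m, n)).
Hypothesis ATA : A^T *m A = 1%:M.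

Lemma colsS_orthonormal (S : {set 'I_n}) : (colsS A S)^T *m colsS A S = 1%:M.
Proof. by rewrite trmx_mxsub -mxsub_mul ATA mxsub1_inj //; apply: enum_val_inj. Qed.

Lemma sea_x_restrict (S : {set 'I_n}) (v : 'cV[R]_n) :
  sea_x A (A *m v) S = restrict S v.
Proof.
apply/matrixP => i j; rewrite !mxE pinv_orthonormal ?colsS_orthonormal //.
rewrite mulmxA trmx_mxsub mul_rowsub_mx ATA -rowsubE.
under eq_bigr => l _ do rewrite mxE.
exact: (@sum_enum_val_eq R _ S (fun x => v x 0) i).
Qed.

End SEAOrthonormal.

Lemma oracle_restrict (R : realType) (n : nat) (eta : R) (v : 'cV[R]_n)
    (S : {set 'I_n}) :
  oracle eta v S = eta *: (restrict S v - v).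
Proof.
apply/matrixP => i j; rewrite (ord1 j) !mxE inE.
case: (i \in S) => /=; first by rewrite andbF subrr mulr0.
by case: eqP => [->|_]; rewrite ?subrr ?mulr0 // sub0r mulrN mulNr.
Qed.

Theorem lemmaC8 (R : realType) (m n k : nat)
  (hk : (0 < k)%N) (hkn : (k <= n)%N) (hnm : (n <= m)%N)
  (A : 'M[R]_(m, n)) (hA : A^T *m A = 1%:M)
  (xstar : 'cV[R]_n) (hsupp : (#|supp xstar| <= k)%N)
  (y : 'cV[R]_m) (hy : y = A *m xstar)
  (X0 : 'cV[R]_n) (eta : R) (heta : 0 < eta) (t : nat) :
  eta *: (A^T *m (A *m sea_xt A y k eta X0 t - y))
  = oracle eta xstar (sea_S A y k eta X0 t).
Proof.
rewrite /sea_xt; move: (sea_S _ _ _ _ _ _) => S.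
by rewrite hy sea_x_restrict // -mulmxBr mulmxA hA mul1mx oracle_restrict.
Qed.
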